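(* Let $Z$ be a real Banach space and $f:Z\to\mathbb{R}$ a continuous convex function. Then there exists a unique closed linear subspace $Y_f$ of $Z$ such that, for the quotient space $X_f:=Z/Y_f$ and the natural projection $\pi:Z\to X_f$, the function $f$ can be written as $$f(z)=c(\pi(z))+\ell(z)\quad\text{for all } z\in Z,$$ where $\ell\in Z^*$ and $c:X_f\to[a,\infty)$ is a convex function which is not constant on any line (i.e. there are no $\hat x,\hat v\in X_f$ with $\hat v\neq 0$ and $t\mapsto c(\hat x+t\hat v)$ constant on $\mathbb{R}$), with $a\in c(X_f)$. Moreover, $$Y_f=\{v\in Z: f(z_0+tv)-f(z_0)-\langle \xi_0,tv\rangle=0 \text{ for all } t\in\mathbb{R}\},$$ where $z_0$ is any point of $Z$ and $\xi_0$ is any element of $\partial f(z_0)$.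
   Context: For a continuous convex $f$ on a Banach space $Z$ with dual $Z^*$ and duality pairing $\langle\cdot,\cdot\rangle$, $\partial f(x)=\{\xi\in Z^*: f(y)\ge f(x)+\langle\xi,y-x\rangle \text{ for all } y\in Z\}$ (nonempty for every $x$). $Z/Y_f$ carries the quotient norm. *)

From Stdlib Require Import Reals.
Open Scope R_scope.

Record NormedSpace := {
  carrier :> Type;
  vzero : carrier;
  vadd : carrier -> carrier -> carrier;
  vopp : carrier -> carrier;
  vscal : R -> carrier -> carrier;
  vnorm : carrier -> R;
  vadd_assoc : forall x y z, vadd x (vadd y z) = vadd (vadd x y) z;
  vadd_comm : forall x y, vadd x y = vadd y x;
  vadd_0 : forall x, vadd x vzero = x;
  vadd_opp : forall x, vadd x (vopp x) = vzero;
  vscal_1 : forall x, vscal 1 x = x;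
  vscal_assoc : forall a b x, vscal a (vscal b x) = vscal (a * b) x;
  vscal_distr_v : forall a x y, vscal a (vadd x y) = vadd (vscal a x) (vscal a y);
  vscal_distr_s : forall a b x, vscal (a + b) x = vadd (vscal a x) (vscal b x);
  vnorm_eq0 : forall x, vnorm x = 0 -> x = vzero;
  vnorm_scal : forall a x, vnorm (vscal a x) = Rabs a * vnorm x;
  vnorm_triangle : forall x y, vnorm (vadd x y) <= vnorm x + vnorm y
}.

Arguments vzero {_}.
Arguments vadd {_} _ _.
Arguments vopp {_} _.
Arguments vscal {_} _ _.
Arguments vnorm {_} _.

Definition vsub {Z : NormedSpace} (x y : Z) : Z := vadd x (vopp y).

Definition cauchy_seq {Z : NormedSpace} (u : nat -> Z) : Prop :=
  forall eps, 0 < eps -> exists N, forall m n, (N <= m)%nat -> (N <= n)%nat ->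
    vnorm (vsub (u m) (u n)) < eps.

Definition seq_lim {Z : NormedSpace} (u : nat -> Z) (l : Z) : Prop :=
  forall eps, 0 < eps -> exists N, forall n, (N <= n)%nat -> vnorm (vsub (u n) l) < eps.

Definition complete (Z : NormedSpace) : Prop :=
  forall u : nat -> Z, cauchy_seq u -> exists l, seq_lim u l.

Definition continuous_fun {Z : NormedSpace} (f : Z -> R) : Prop :=
  forall z eps, 0 < eps -> exists delta, 0 < delta /\
    forall w, vnorm (vsub w z) < delta -> Rabs (f w - f z) < eps.

Definition convex_fun {Z : NormedSpace} (f : Z -> R) : Prop :=
  forall x y (lam : R), 0 <= lam <= 1 ->
    f (vadd (vscal lam x) (vscal (1 - lam) y)) <= lam * f x + (1 - lam) * f y.

Definition in_dual {Z : NormedSpace} (xi : Z -> R) : Prop :=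
  (forall x y, xi (vadd x y) = xi x + xi y) /\
  (forall a x, xi (vscal a x) = a * xi x) /\
  (exists M, forall x, Rabs (xi x) <= M * vnorm x).

Definition subdiff {Z : NormedSpace} (f : Z -> R) (x : Z) (xi : Z -> R) : Prop :=
  in_dual xi /\ forall y, f y >= f x + xi (vsub y x).

Definition closed_subspace {Z : NormedSpace} (Y : Z -> Prop) : Prop :=
  Y vzero /\
  (forall x y, Y x -> Y y -> Y (vadd x y)) /\
  (forall a x, Y x -> Y (vscal a x)) /\
  (forall (u : nat -> Z) l, (forall n, Y (u n)) -> seq_lim u l -> Y l).

(* A function c on the
   quotient X = Z/Y is represented by the Y-invariant function g = c o pi
   on Z; this is a bijective correspondence.  Under it:
   - c convex            <-> g convex;
   - c(x^ + t v^) with v^ <> 0  <-> g(x + t v) with v not in Y;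
   - c(X) = g(Z). *)
Definition decomposes {Z : NormedSpace} (f : Z -> R) (Y : Z -> Prop) : Prop :=
  exists (l : Z -> R) (g : Z -> R),
    in_dual l /\
    (forall z y, Y y -> g (vadd z y) = g z) /\
    convex_fun g /\
    (forall x v, ~ Y v -> ~ (exists k, forall t : R, g (vadd x (vscal t v)) = k)) /\
    (exists a, (forall z, a <= g z) /\ (exists z, g z = a)) /\
    (forall z, f z = g z + l z).

From Stdlib Require Import Reals Lra Lia List Classical ClassicalEpsilon.
From mathcomp Require classical_sets.
Open Scope R_scope.

(* Let xi be a subgradient of f at 0; it exists by a Hahn-Banach argument (a maximal partial
   linear minorant of v |-> f v - f 0, bounded thanks to continuity).  Then g := f - xi is
   convex, continuous and minimal at 0, and Y_f is the constancy space of g, i.e. the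
   directions along which g is invariant.  A continuous convex function that is bounded above
   on one line parallel to v is invariant under translation by v; hence g is constant on no
   line with direction outside Y_f.  Conversely, for any decomposition f = c o pi + l, the
   restriction of f to the line z0 + t v is affine in t exactly when v lies in the kernel of
   pi, because c is bounded below and not constant on lines; comparing with a subgradient
   xi0 at z0 identifies the kernel with the set in the statement, which gives uniqueness. *)

Section VectorSpaceFacts.
Variable Z : NormedSpace.

Lemma vadd_0_l (x : Z) : vadd vzero x = x.
Proof. rewrite vadd_comm; apply vadd_0. Qed.

Lemma vadd_reg_l (x y z : Z) : vadd x y = vadd x z -> y = z.
Proof.
  intro H.
  assert (E : vadd (vopp x) (vadd x y) = vadd (vopp x) (vadd x z)) by now rewrite H.
  rewrite !vadd_assoc, (vadd_comm Z (vopp x) x), vadd_opp, !vadd_0_l in E. exact E.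
Qed.

Lemma vscal_0_l (x : Z) : vscal 0 x = vzero.
Proof.
  apply (vadd_reg_l (vscal 0 x)). rewrite vadd_0, <- vscal_distr_s, Rplus_0_l. reflexivity.
Qed.

Lemma vscal_0_r (a : R) : vscal a (@vzero Z) = vzero.
Proof.
  apply (vadd_reg_l (vscal a vzero)). rewrite vadd_0, <- vscal_distr_v, vadd_0. reflexivity.
Qed.

Lemma vopp_vscal (x : Z) : vopp x = vscal (-1) x.
Proof.
  apply (vadd_reg_l x). rewrite vadd_opp. rewrite <- (vscal_1 _ x) at 1.
  rewrite <- vscal_distr_s, Rplus_opp_r, vscal_0_l. reflexivity.
Qed.

Lemma vadd_add_swap (p q r s : Z) : vadd (vadd p q) (vadd r s) = vadd (vadd p r) (vadd q s).
Proof.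
  rewrite <- !vadd_assoc. f_equal. rewrite !vadd_assoc. f_equal. apply vadd_comm.
Qed.

Lemma vnorm_0 : vnorm (@vzero Z) = 0.
Proof. rewrite <- (vscal_0_l vzero), vnorm_scal, Rabs_R0. ring. Qed.

Lemma vnorm_nonneg (x : Z) : 0 <= vnorm x.
Proof.
  assert (H := vnorm_triangle _ x (vopp x)).
  rewrite vadd_opp, vnorm_0, vopp_vscal, vnorm_scal in H.
  replace (Rabs (-1)) with 1 in H by (rewrite Rabs_left; lra). lra.
Qed.

End VectorSpaceFacts.

Section VectorExpressions.
Variable Z : NormedSpace.

Inductive vexpr :=
  | VAtom (n : nat) | VZero | VAdd (e1 e2 : vexpr) | VOpp (e : vexpr) | VScal (r : R) (e : vexpr).

Fixpoint veval (env : list Z) (e : vexpr) : Z :=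
  match e with
  | VAtom n => nth n env vzero
  | VZero => vzero
  | VAdd e1 e2 => vadd (veval env e1) (veval env e2)
  | VOpp e => vopp (veval env e)
  | VScal r e => vscal r (veval env e)
  end.

Fixpoint vcoef (e : vexpr) (k : nat) : R :=
  match e with
  | VAtom n => if Nat.eqb k n then 1 else 0
  | VZero => 0
  | VAdd e1 e2 => vcoef e1 k + vcoef e2 k
  | VOpp e => - vcoef e k
  | VScal r e => r * vcoef e k
  end.

Fixpoint lincomb (c : nat -> R) (env : list Z) : Z :=
  match env with
  | nil => vzero
  | x :: env => vadd (vscal (c 0%nat) x) (lincomb (fun k => c (S k)) env)
  end.

Lemma lincomb_ext_lt (c d : nat -> R) (env : list Z) :
  (forall k, (k < length env)%nat -> c k = d k) -> lincomb c env = lincomb d env.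
Proof.
  revert c d; induction env as [|x env IH]; intros c d H; simpl in *; [reflexivity|].
  rewrite (H 0%nat) by lia. f_equal. apply IH. intros k Hk. apply H. lia.
Qed.

Lemma lincomb_zero (env : list Z) : lincomb (fun _ => 0) env = vzero.
Proof.
  induction env as [|x env IH]; simpl; [reflexivity|].
  rewrite IH, vscal_0_l, vadd_0. reflexivity.
Qed.

Lemma lincomb_add (c d : nat -> R) (env : list Z) :
  lincomb (fun k => c k + d k) env = vadd (lincomb c env) (lincomb d env).
Proof.
  revert c d; induction env as [|x env IH]; intros c d; simpl.
  - rewrite vadd_0. reflexivity.
  - rewrite IH, vscal_distr_s, vadd_add_swap. reflexivity.
Qed.

Lemma lincomb_scal (r : R) (c : nat -> R) (env : list Z) :
  lincomb (fun k => r * c k) env = vscal r (lincomb c env).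
Proof.
  revert c; induction env as [|x env IH]; intro c; simpl.
  - rewrite vscal_0_r. reflexivity.
  - rewrite IH, vscal_distr_v, vscal_assoc. reflexivity.
Qed.

Lemma lincomb_atom (n : nat) (env : list Z) :
  lincomb (fun k => if Nat.eqb k n then 1 else 0) env = nth n env vzero.
Proof.
  revert n; induction env as [|x env IH]; intro n; simpl.
  - destruct n; reflexivity.
  - destruct n as [|n]; simpl.
    + rewrite vscal_1, lincomb_zero, vadd_0. reflexivity.
    + rewrite IH, vscal_0_l, vadd_0_l. reflexivity.
Qed.

Lemma veval_lincomb (env : list Z) (e : vexpr) : veval env e = lincomb (vcoef e) env.
Proof.
  induction e as [n| |e1 IH1 e2 IH2|e IH|r e IH]; simpl.
  - symmetry. apply lincomb_atom.
  - symmetry. apply lincomb_zero.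
  - rewrite IH1, IH2, lincomb_add. reflexivity.
  - rewrite IH, vopp_vscal, <- lincomb_scal. apply lincomb_ext_lt. intros; ring.
  - rewrite IH, lincomb_scal. reflexivity.
Qed.

Lemma veval_eq (env : list Z) (e1 e2 : vexpr) :
  Forall (fun k => vcoef e1 k = vcoef e2 k) (seq 0 (length env)) ->
  veval env e1 = veval env e2.
Proof.
  rewrite Forall_forall. intro H. rewrite !veval_lincomb. apply lincomb_ext_lt.
  intros k Hk. apply H, in_seq. lia.
Qed.

End VectorExpressions.

Arguments veval {Z} env e.

Ltac list_index t l :=
  lazymatch l with
  | t :: _ => constr:(O)
  | _ :: ?l' => let n := list_index t l' in constr:(S n)
  end.

Ltac add_atom t l :=
  lazymatch l with
  | nil => constr:(t :: nil)
  | t :: _ => l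
  | ?x :: ?l' => let l'' := add_atom t l' in constr:(x :: l'')
  end.

Ltac vatoms t l :=
  lazymatch t with
  | vzero => l
  | vadd ?a ?b => let l := vatoms a l in vatoms b l
  | vsub ?a ?b => let l := vatoms a l in vatoms b l
  | vopp ?a => vatoms a l
  | vscal _ ?a => vatoms a l
  | _ => add_atom t l
  end.

Ltac vreify env t :=
  lazymatch t with
  | vzero => constr:(VZero)
  | vadd ?a ?b => let ra := vreify env a in let rb := vreify env b in constr:(VAdd ra rb)
  | vsub ?a ?b => let ra := vreify env a in let rb := vreify env b in constr:(VAdd ra (VOpp rb))
  | vopp ?a => let ra := vreify env a in constr:(VOpp ra)
  | vscal ?r ?a => let ra := vreify env a in constr:(VScal r ra)
  | _ => let n := list_index t env in constr:(VAtom n)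
  end.

(* Compares the coefficients of both sides on the atoms they contain; coefficient
   identities that [field; lra] cannot close are left as goals. *)
Ltac vring :=
  lazymatch goal with
  | |- @eq ?T ?L ?R =>
      let env0 := vatoms L (@nil T) in
      let env := vatoms R env0 in
      let l := vreify env L in
      let r := vreify env R in
      change (veval env l = veval env r);
      apply veval_eq; simpl;
      repeat first [apply Forall_nil | apply Forall_cons];
      try (field; lra)
  end.

Definition linear_fun {Z : NormedSpace} (xi : Z -> R) : Prop :=
  (forall x y, xi (vadd x y) = xi x + xi y) /\ (forall a x, xi (vscal a x) = a * xi x).

Lemma linear_fun_0 {Z : NormedSpace} (xi : Z -> R) : linear_fun xi -> xi vzero = 0.
Proof.
  intros [_ Hscal]. rewrite <- (vscal_0_l _ vzero), Hscal. ring.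
Qed.

Lemma linear_fun_sub {Z : NormedSpace} (xi : Z -> R) x y :
  linear_fun xi -> xi (vsub x y) = xi x - xi y.
Proof.
  intros [Hadd Hscal]. unfold vsub. rewrite Hadd, vopp_vscal, Hscal. ring.
Qed.

Section HahnBanach.
Variable Z : NormedSpace.
Variable p : Z -> R.
Hypothesis p_convex : convex_fun p.
Hypothesis p_0 : p vzero = 0.

Record minorant_graph (G : Z * R -> Prop) : Prop := {
  mg_add : forall x a y b, G (x, a) -> G (y, b) -> G (vadd x y, a + b);
  mg_scal : forall r x a, G (x, a) -> G (vscal r x, r * a);
  mg_fun : forall x a b, G (x, a) -> G (x, b) -> a = b;
  mg_le : forall x a, G (x, a) -> a <= p x
}.

Lemma minorant_graph_bigcup (F : (Z * R -> Prop) -> Prop) :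
  (forall G, F G -> minorant_graph G) -> classical_sets.total_on F classical_sets.subset ->
  minorant_graph (classical_sets.bigcup F (fun G => G)).
Proof.
  intros HF Htot. split.
  - intros x a y b [G FG HG] [G' FG' HG'].
    destruct (Htot G G' FG FG') as [S|S].
    + exists G'; [exact FG'|]. apply (mg_add _ (HF G' FG')); auto.
    + exists G; [exact FG|]. apply (mg_add _ (HF G FG)); auto.
  - intros r x a [G FG HG]. exists G; [exact FG|]. apply (mg_scal _ (HF G FG)); auto.
  - intros x a b [G FG HG] [G' FG' HG'].
    destruct (Htot G G' FG FG') as [S|S].
    + apply (mg_fun _ (HF G' FG') x); auto.
    + apply (mg_fun _ (HF G FG) x); auto.
  - intros x a [G FG HG]. apply (mg_le _ (HF G FG) x a HG).
Qed.

Section Extension.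
Variable G : Z * R -> Prop.
Hypothesis HG : minorant_graph G.
Hypothesis G_0 : G (vzero, 0).
Variable w : Z.

Lemma extension_slopes_le x a y b s t : G (y, b) -> G (x, a) -> 0 < s -> 0 < t ->
  (b - p (vadd y (vscal (- s) w))) / s <= (p (vadd x (vscal t w)) - a) / t.
Proof.
  intros Hy Hx Hs Ht.
  set (q := t + s). assert (Hq : 0 < q) by (unfold q; lra).
  set (P1 := p (vadd y (vscal (- s) w))). set (P2 := p (vadd x (vscal t w))).
  (* The point (t y + s x) / q is a convex combination of y - s w and x + t w. *)
  assert (Hmid := mg_le _ HG _ _ (mg_scal _ HG (1 / q) _ _
                    (mg_add _ HG _ _ _ _ (mg_scal _ HG t _ _ Hy) (mg_scal _ HG s _ _ Hx)))).
  replace (vscal (1 / q) (vadd (vscal t y) (vscal s x))) with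
    (vadd (vscal (t / q) (vadd y (vscal (- s) w))) (vscal (1 - t / q) (vadd x (vscal t w))))
    in Hmid by (unfold q in *; vring).
  assert (Hconv := p_convex (vadd y (vscal (- s) w)) (vadd x (vscal t w)) (t / q)).
  fold P1 P2 in Hmid, Hconv.
  assert (Hlam : 0 <= t / q <= 1).
  { unfold q. split; [apply Rlt_le, Rdiv_lt_0_compat; lra|].
    apply Rmult_le_reg_r with (t + s); [lra|]. unfold Rdiv. rewrite Rmult_assoc, Rinv_l; lra. }
  specialize (Hconv Hlam).
  assert (Hcross : t * b + s * a <= t * P1 + s * P2).
  { replace (t * b + s * a) with (q * (1 / q * (t * b + s * a))) by (field; lra).
    replace (t * P1 + s * P2) with (q * (t / q * P1 + (1 - t / q) * P2)) by (unfold q; field; lra).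
    apply Rmult_le_compat_l; lra. }
  apply Rmult_le_reg_r with (s * t); [nra|].
  replace ((b - P1) / s * (s * t)) with (t * (b - P1)) by (field; lra).
  replace ((P2 - a) / t * (s * t)) with (s * (P2 - a)) by (field; lra).
  lra.
Qed.

Lemma extension_slope_exists : exists c,
  (forall x a s, G (x, a) -> 0 < s -> (a - p (vadd x (vscal (- s) w))) / s <= c) /\
  (forall x a t, G (x, a) -> 0 < t -> c <= (p (vadd x (vscal t w)) - a) / t).
Proof.
  set (L := fun r => exists x a s,
         G (x, a) /\ 0 < s /\ r = (a - p (vadd x (vscal (- s) w))) / s).
  assert (HL : bound L).
  { exists ((p (vadd vzero (vscal 1 w)) - 0) / 1). intros r (x & a & s & Hx & Hs & ->).
    apply extension_slopes_le; auto; lra. }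
  assert (HL0 : exists r, L r).
  { exists ((0 - p (vadd vzero (vscal (- 1) w))) / 1), vzero, 0, 1.
    split; [exact G_0|split; [lra|reflexivity]]. }
  destruct (completeness L HL HL0) as [c [Hub Hlub]].
  exists c. split.
  - intros x a s Hx Hs. apply Hub. exists x, a, s. auto.
  - intros x a t Hx Ht. apply Hlub. intros r (y & b & s & Hy & Hs & ->).
    apply extension_slopes_le; auto.
Qed.

Definition graph_extend (c : R) : Z * R -> Prop :=
  fun q => exists x a t, G (x, a) /\ q = (vadd x (vscal t w), a + t * c).

Lemma graph_extend_incl c q : G q -> graph_extend c q.
Proof.
  destruct q as [x a]. intro Hx. exists x, a, 0. split; [exact Hx|].
  rewrite vscal_0_l, vadd_0, Rmult_0_l, Rplus_0_r. reflexivity.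
Qed.

Lemma graph_extend_at_w c : graph_extend c (w, c).
Proof. exists vzero, 0, 1. split; [exact G_0|]. f_equal; [vring|ring]. Qed.

Section Admissible.
Variable c : R.
Hypothesis w_new : forall a, ~ G (w, a).
Hypothesis c_ge : forall x a s, G (x, a) -> 0 < s -> (a - p (vadd x (vscal (- s) w))) / s <= c.
Hypothesis c_le : forall x a t, G (x, a) -> 0 < t -> c <= (p (vadd x (vscal t w)) - a) / t.

Lemma graph_extend_fun x a b : graph_extend c (x, a) -> graph_extend c (x, b) -> a = b.
Proof.
  intros (x1 & a1 & t & Hx1 & E1) (x2 & a2 & s & Hx2 & E2).
  injection E1 as -> ->. injection E2 as Ex ->.
  destruct (Req_dec t s) as [<-|Hts].
  - assert (x1 = x2) as <-.
    { apply (vadd_reg_l _ (vscal t w)). rewrite (vadd_comm _ _ x1), (vadd_comm _ _ x2). exact Ex. }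
    rewrite (mg_fun _ HG x1 a1 a2 Hx1 Hx2). reflexivity.
  - (* otherwise [w] would already lie in the domain of [G] *)
    exfalso. apply (w_new (1 / (s - t) * (a1 + -1 * a2))).
    replace w with (vscal (1 / (s - t)) (vadd x1 (vscal (-1) x2))).
    + apply (mg_scal _ HG), (mg_add _ HG); auto. apply (mg_scal _ HG); auto.
    + transitivity (vscal (1 / (s - t))
        (vadd (vsub (vadd x1 (vscal t w)) (vadd x2 (vscal s w))) (vscal (s - t) w))).
      * vring.
      * rewrite Ex. vring.
Qed.

Lemma graph_extend_le x a : graph_extend c (x, a) -> a <= p x.
Proof.
  intros (y & b & t & Hy & E). injection E as -> ->.
  destruct (Rtotal_order t 0) as [Ht|[->|Ht]].
  - assert (H := c_ge y b (- t) Hy ltac:(lra)). rewrite Ropp_involutive in H.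
    set (P := p (vadd y (vscal t w))) in *.
    assert (H' : (b - P) / - t * - t <= c * - t) by (apply Rmult_le_compat_r; lra).
    replace ((b - P) / - t * - t) with (b - P) in H' by (field; lra). lra.
  - rewrite vscal_0_l, vadd_0, Rmult_0_l, Rplus_0_r. exact (mg_le _ HG y b Hy).
  - assert (H := c_le y b t Hy Ht).
    set (P := p (vadd y (vscal t w))) in *.
    assert (H' : c * t <= (P - b) / t * t) by (apply Rmult_le_compat_r; lra).
    replace ((P - b) / t * t) with (P - b) in H' by (field; lra). lra.
Qed.

Lemma minorant_graph_extend : minorant_graph (graph_extend c).
Proof.
  split.
  - intros x1 a1 y1 b1 (x & a & t & Hx & E1) (y & b & s & Hy & E2).
    injection E1 as -> ->. injection E2 as -> ->.
    exists (vadd x y), (a + b), (t + s). split; [exact (mg_add _ HG _ _ _ _ Hx Hy)|].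
    f_equal; [vring|ring].
  - intros r x1 a1 (x & a & t & Hx & E1). injection E1 as -> ->.
    exists (vscal r x), (r * a), (r * t). split; [exact (mg_scal _ HG r _ _ Hx)|].
    f_equal; [vring|ring].
  - exact graph_extend_fun.
  - exact graph_extend_le.
Qed.
End Admissible.
End Extension.

Section Maximal.
Variable A : Z * R -> Prop.
Hypothesis HA : minorant_graph A.
Hypothesis A_max : forall B, classical_sets.proper A B -> ~ minorant_graph B.

Lemma maximal_graph_0 : A (vzero, 0).
Proof.
  destruct (classic (exists q, A q)) as [[[x a] Hx]|Hnone].
  - assert (H := mg_scal _ HA 0 x a Hx). rewrite vscal_0_l, Rmult_0_l in H. exact H.
  - exfalso. apply (A_max (fun q => q = (vzero, 0))).
    + split.
      * intros q Hq. exfalso. apply Hnone. exists q. exact Hq.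
      * intro H. apply Hnone. exists (vzero, 0). apply H. reflexivity.
    + split.
      * intros x a y b [= -> ->] [= -> ->]. rewrite vadd_0, Rplus_0_r. reflexivity.
      * intros r x a [= -> ->]. rewrite vscal_0_r, Rmult_0_r. reflexivity.
      * intros x a b [= -> ->] [= ->]. reflexivity.
      * intros x a [= -> ->]. rewrite p_0. lra.
Qed.

Lemma maximal_graph_total w : exists a, A (w, a).
Proof.
  apply NNPP. intro Hw.
  assert (w_new : forall a, ~ A (w, a)) by (intros a Ha; apply Hw; exists a; exact Ha).
  destruct (extension_slope_exists A HA maximal_graph_0 w) as [c [c_ge c_le]].
  apply (A_max (graph_extend A w c)).
  - split.
    + exact (graph_extend_incl A w c).
    + intro H. exact (w_new c (H _ (graph_extend_at_w A maximal_graph_0 w c))).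
  - exact (minorant_graph_extend A HA w c w_new c_ge c_le).
Qed.
End Maximal.

Lemma linear_minorant_exists : exists xi, linear_fun xi /\ forall x, xi x <= p x.
Proof.
  destruct (@classical_sets.Zorn_bigcup (Z * R) minorant_graph minorant_graph_bigcup)
    as [A [HA A_max]].
  destruct (choice (fun x a => A (x, a)) (maximal_graph_total A HA A_max)) as [xi Hxi].
  exists xi. repeat split.
  - intros x y. apply (mg_fun _ HA (vadd x y)); [apply Hxi|]. apply (mg_add _ HA); apply Hxi.
  - intros r x. apply (mg_fun _ HA (vscal r x)); [apply Hxi|]. apply (mg_scal _ HA); apply Hxi.
  - intro x. apply (mg_le _ HA), Hxi.
Qed.

End HahnBanach.

Lemma linear_minorant_bounded {Z : NormedSpace} (p xi : Z -> R) :
  continuous_fun p -> p vzero = 0 -> linear_fun xi -> (forall x, xi x <= p x) ->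
  exists M, forall x, Rabs (xi x) <= M * vnorm x.
Proof.
  intros p_cont p_0 Hxi Hle.
  destruct (p_cont vzero 1 Rlt_0_1) as [d [Hd Hball]].
  assert (Hsmall : forall y, vnorm y < d -> xi y < 1).
  { intros y Hy. apply Rle_lt_trans with (p y); [apply Hle|].
    specialize (Hball y). replace (vsub y vzero) with y in Hball by vring.
    specialize (Hball Hy). apply Rabs_def2 in Hball. lra. }
  exists (2 / d). intro x.
  destruct (Req_dec (vnorm x) 0) as [Hx0|Hx0].
  - apply vnorm_eq0 in Hx0. subst x.
    rewrite (linear_fun_0 xi Hxi), vnorm_0, Rabs_R0. lra.
  - set (N := vnorm x) in *.
    assert (HN : 0 < N) by (pose proof (vnorm_nonneg _ x); unfold N in *; lra).
    set (r := d / (2 * N)).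
    assert (Hr : 0 < r) by (unfold r; apply Rdiv_lt_0_compat; lra).
    assert (Hnorm : forall r', Rabs r' = r -> vnorm (vscal r' x) < d).
    { intros r' Hr'. rewrite vnorm_scal, Hr'. fold N. unfold r. field_simplify; lra. }
    assert (Hplus := Hsmall _ (Hnorm r (Rabs_right r ltac:(lra)))).
    assert (Hminus := Hsmall _ (Hnorm (- r) ltac:(rewrite Rabs_Ropp; apply Rabs_right; lra))).
    destruct Hxi as [_ Hscal]. rewrite Hscal in Hplus, Hminus.
    assert (Habs : Rabs (xi x) * r < 1).
    { rewrite <- (Rabs_right r) by lra. rewrite <- Rabs_mult, Rmult_comm.
      apply Rabs_def1; lra. }
    apply Rmult_le_reg_r with r; [exact Hr|].
    replace (2 / d * N * r) with 1 by (unfold r; field; lra). lra.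
Qed.

Lemma subdiff_exists {Z : NormedSpace} (f : Z -> R) :
  continuous_fun f -> convex_fun f -> forall z0, exists xi, subdiff f z0 xi.
Proof.
  intros f_cont f_convex z0.
  set (p := fun v => f (vadd z0 v) - f z0).
  assert (p_convex : convex_fun p).
  { intros x y lam Hlam. unfold p.
    replace (vadd z0 (vadd (vscal lam x) (vscal (1 - lam) y))) with
      (vadd (vscal lam (vadd z0 x)) (vscal (1 - lam) (vadd z0 y))) by vring.
    specialize (f_convex (vadd z0 x) (vadd z0 y) lam Hlam). lra. }
  assert (p_0 : p vzero = 0) by (unfold p; rewrite vadd_0; ring).
  assert (p_cont : continuous_fun p).
  { intros z eps Heps. destruct (f_cont (vadd z0 z) eps Heps) as [d [Hd Hball]].
    exists d. split; [exact Hd|]. intros w Hw. unfold p.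
    replace (f (vadd z0 w) - f z0 - (f (vadd z0 z) - f z0)) with (f (vadd z0 w) - f (vadd z0 z))
      by ring.
    apply Hball. replace (vsub (vadd z0 w) (vadd z0 z)) with (vsub w z) by vring. exact Hw. }
  destruct (linear_minorant_exists Z p p_convex p_0) as [xi [Hxi Hle]].
  destruct (linear_minorant_bounded p xi p_cont p_0 Hxi Hle) as [M HM].
  exists xi. split.
  - destruct Hxi as [Hadd Hscal]. exact (conj Hadd (conj Hscal (ex_intro _ M HM))).
  - intro y. specialize (Hle (vsub y z0)). unfold p in Hle.
    replace (vadd z0 (vsub y z0)) with y in Hle by vring. lra.
Qed.

Lemma small_weight_exists (D C d eps : R) :
  0 <= D -> 0 <= C -> 0 < d -> 0 < eps ->
  exists lam, 0 < lam <= 1 / 2 /\ 2 * lam * D < d /\ lam * C <= eps.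
Proof.
  intros HD HC Hd Heps.
  exists (Rmin (1 / 2) (Rmin (d / (4 * (D + 1))) (eps / (C + 1)))).
  set (lam := Rmin _ _).
  assert (H1 : lam <= 1 / 2) by apply Rmin_l.
  assert (H2 : lam <= d / (4 * (D + 1))) by (eapply Rle_trans; [apply Rmin_r|apply Rmin_l]).
  assert (H3 : lam <= eps / (C + 1)) by (eapply Rle_trans; [apply Rmin_r|apply Rmin_r]).
  assert (H0 : 0 < lam).
  { apply Rmin_glb_lt; [lra|]. apply Rmin_glb_lt; apply Rdiv_lt_0_compat; lra. }
  assert (H2' : lam * (4 * (D + 1)) <= d).
  { replace d with (d / (4 * (D + 1)) * (4 * (D + 1))) by (field; lra).
    apply Rmult_le_compat_r; lra. }
  assert (H3' : lam * (C + 1) <= eps).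
  { replace eps with (eps / (C + 1) * (C + 1)) by (field; lra).
    apply Rmult_le_compat_r; lra. }
  repeat split; nra.
Qed.

Section ConvexLines.
Variable Z : NormedSpace.
Variable g : Z -> R.
Hypothesis g_cont : continuous_fun g.
Hypothesis g_convex : convex_fun g.

(* Write z + u = lam (x + u / lam) + (1 - lam) w: the first point stays on the line where
   g <= K, and w -> z as lam -> 0. *)
Lemma convex_shift_le_of_bounded_line x u K :
  (forall t, g (vadd x (vscal t u)) <= K) -> forall z, g (vadd z u) <= g z.
Proof.
  intros HK z. apply le_epsilon. intros e He.
  destruct (g_cont z (e / 2) ltac:(lra)) as [d [Hd Hball]].
  destruct (small_weight_exists (vnorm (vsub z x)) (Rabs (K - g z)) d (e / 2)
              (vnorm_nonneg _ _) (Rabs_pos _) Hd ltac:(lra)) as (lam & Hlam & HlamD & HlamC).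
  set (w := vscal (1 / (1 - lam)) (vadd z (vscal (- lam) x))).
  assert (Hw : g w < g z + e / 2).
  { assert (Hwz : vsub w z = vscal (lam / (1 - lam)) (vsub z x)) by (unfold w; vring).
    assert (Hdist : vnorm (vsub w z) < d).
    { rewrite Hwz, vnorm_scal, Rabs_right by (apply Rle_ge, Rlt_le, Rdiv_lt_0_compat; lra).
      assert (Hratio : lam / (1 - lam) <= 2 * lam).
      { apply Rmult_le_reg_r with (1 - lam); [lra|].
        replace (lam / (1 - lam) * (1 - lam)) with lam by (field; lra). nra. }
      pose proof (vnorm_nonneg _ (vsub z x)). nra. }
    specialize (Hball w Hdist). apply Rabs_def2 in Hball. lra. }
  assert (Hconv := g_convex (vadd x (vscal (1 / lam) u)) w lam ltac:(lra)).
  replace (vadd (vscal lam (vadd x (vscal (1 / lam) u))) (vscal (1 - lam) w))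
    with (vadd z u) in Hconv by (unfold w; vring).
  assert (T1 : lam * g (vadd x (vscal (1 / lam) u)) <= lam * K)
    by (apply Rmult_le_compat_l; [lra|apply HK]).
  assert (T2 : (1 - lam) * g w <= (1 - lam) * (g z + e / 2))
    by (apply Rmult_le_compat_l; lra).
  assert (T3 : lam * (K - g z) <= e / 2) by (pose proof (Rle_abs (K - g z)); nra).
  nra.
Qed.

Lemma convex_shift_eq_of_bounded_line x u K :
  (forall t, g (vadd x (vscal t u)) <= K) -> forall z, g (vadd z u) = g z.
Proof.
  intros HK z. apply Rle_antisym; [exact (convex_shift_le_of_bounded_line x u K HK z)|].
  assert (HK' : forall t, g (vadd x (vscal t (vopp u))) <= K).
  { intro t. replace (vscal t (vopp u)) with (vscal (- t) u) by vring. apply HK. }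
  assert (H := convex_shift_le_of_bounded_line x (vopp u) K HK' (vadd z u)).
  replace (vadd (vadd z u) (vopp u)) with z in H by vring. exact H.
Qed.

Definition constancy_space (v : Z) : Prop := forall z t, g (vadd z (vscal t v)) = g z.

Lemma constancy_space_of_line x v k :
  (forall t, g (vadd x (vscal t v)) = k) -> constancy_space v.
Proof.
  intros Hk z t. apply (convex_shift_eq_of_bounded_line x (vscal t v) k).
  intro s. rewrite vscal_assoc, Hk. apply Rle_refl.
Qed.

Lemma constancy_space_closed : closed_subspace constancy_space.
Proof.
  split; [|split; [|split]].
  - intros z t. rewrite vscal_0_r, vadd_0. reflexivity.
  - intros u v Hu Hv z t.
    replace (vadd z (vscal t (vadd u v))) with (vadd (vadd z (vscal t u)) (vscal t v)) by vring.
    rewrite Hv, Hu. reflexivity.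
  - intros a v Hv z t. rewrite vscal_assoc. apply Hv.
  - intros u l Hu Hl z t.
    destruct (Req_dec (g (vadd z (vscal t l))) (g z)) as [E|Hne]; [exact E|exfalso].
    set (eps := Rabs (g (vadd z (vscal t l)) - g z)).
    assert (Heps : 0 < eps) by (apply Rabs_pos_lt; lra).
    destruct (g_cont (vadd z (vscal t l)) eps Heps) as [d [Hd Hball]].
    destruct (Hl (d / (Rabs t + 1))) as [N HN].
    { apply Rdiv_lt_0_compat; [lra|]. pose proof (Rabs_pos t). lra. }
    specialize (HN N (le_n N)).
    assert (Hclose : vnorm (vsub (vadd z (vscal t (u N))) (vadd z (vscal t l))) < d).
    { replace (vsub (vadd z (vscal t (u N))) (vadd z (vscal t l))) with (vscal t (vsub (u N) l))
        by vring.
      rewrite vnorm_scal.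
      pose proof (vnorm_nonneg _ (vsub (u N) l)). pose proof (Rabs_pos t).
      apply Rle_lt_trans with (vnorm (vsub (u N) l) * (Rabs t + 1)); [nra|].
      replace d with (d / (Rabs t + 1) * (Rabs t + 1)) by (field; lra).
      apply Rmult_lt_compat_r; lra. }
    specialize (Hball _ Hclose). rewrite Hu, Rabs_minus_sym in Hball. fold eps in Hball. lra.
Qed.

End ConvexLines.

Lemma linear_fun_of_in_dual {Z : NormedSpace} (xi : Z -> R) : in_dual xi -> linear_fun xi.
Proof. intros [Hadd [Hscal _]]. split; assumption. Qed.

Lemma in_dual_continuous {Z : NormedSpace} (xi : Z -> R) : in_dual xi -> continuous_fun xi.
Proof.
  intros Hxi z eps Heps. destruct Hxi as [Hadd [Hscal [M HM]]].
  set (M' := Rabs M + 1).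
  assert (HM' : 0 < M') by (unfold M'; pose proof (Rabs_pos M); lra).
  exists (eps / M'). split; [apply Rdiv_lt_0_compat; lra|]. intros w Hw.
  rewrite <- (linear_fun_sub xi w z (conj Hadd Hscal)).
  apply Rle_lt_trans with (M' * vnorm (vsub w z)).
  - apply Rle_trans with (M * vnorm (vsub w z)); [apply HM|].
    apply Rmult_le_compat_r; [apply vnorm_nonneg|]. unfold M'. pose proof (Rle_abs M). lra.
  - replace eps with (M' * (eps / M')) by (field; lra). apply Rmult_lt_compat_l; lra.
Qed.

Lemma continuous_fun_minus {Z : NormedSpace} (f h : Z -> R) :
  continuous_fun f -> continuous_fun h -> continuous_fun (fun z => f z - h z).
Proof.
  intros Hf Hh z eps Heps.
  destruct (Hf z (eps / 2) ltac:(lra)) as [d1 [Hd1 H1]].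
  destruct (Hh z (eps / 2) ltac:(lra)) as [d2 [Hd2 H2]].
  exists (Rmin d1 d2). split; [apply Rmin_glb_lt; lra|]. intros w Hw.
  destruct (Rabs_def2 _ _ (H1 w (Rlt_le_trans _ _ _ Hw (Rmin_l _ _)))).
  destruct (Rabs_def2 _ _ (H2 w (Rlt_le_trans _ _ _ Hw (Rmin_r _ _)))).
  apply Rabs_def1; lra.
Qed.

Lemma convex_fun_minus_linear {Z : NormedSpace} (f xi : Z -> R) :
  convex_fun f -> linear_fun xi -> convex_fun (fun z => f z - xi z).
Proof.
  intros Hf [Hadd Hscal] x y lam Hlam. rewrite Hadd, !Hscal.
  specialize (Hf x y lam Hlam). lra.
Qed.

Lemma subdiff_minimizer {Z : NormedSpace} (f xi : Z -> R) z0 :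
  subdiff f z0 xi -> forall y, f z0 - xi z0 <= f y - xi y.
Proof.
  intros [Hxi Hsub] y. specialize (Hsub y).
  rewrite (linear_fun_sub xi y z0 (linear_fun_of_in_dual xi Hxi)) in Hsub. lra.
Qed.

Lemma affine_bounded_below_slope_0 (a b m : R) : (forall t, a <= b + t * m) -> m = 0.
Proof.
  intro H. destruct (Req_dec m 0) as [E|Hm]; [exact E|exfalso].
  specialize (H ((a - b - 1) / m)). field_simplify in H; [lra|exact Hm].
Qed.

Lemma decomposes_constancy_space {Z : NormedSpace} (f xi : Z -> R) z0 :
  continuous_fun f -> convex_fun f -> subdiff f z0 xi ->
  decomposes f (constancy_space Z (fun z => f z - xi z)).
Proof.
  intros f_cont f_convex Hxi. set (g := fun z => f z - xi z).
  assert (g_cont : continuous_fun g)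
    by exact (continuous_fun_minus f xi f_cont (in_dual_continuous xi (proj1 Hxi))).
  assert (g_convex : convex_fun g)
    by exact (convex_fun_minus_linear f xi f_convex (linear_fun_of_in_dual xi (proj1 Hxi))).
  exists xi, g. split; [exact (proj1 Hxi)|]. split; [|split; [exact g_convex|split; [|split]]].
  - intros z y Hy. rewrite <- (vscal_1 _ y). apply Hy.
  - intros x v Hv [k Hk]. exact (Hv (constancy_space_of_line Z g g_cont g_convex x v k Hk)).
  - exists (g z0). split; [exact (subdiff_minimizer f xi z0 Hxi)|]. exists z0. reflexivity.
  - intro z. unfold g. ring.
Qed.

Lemma decomposes_mem_iff {Z : NormedSpace} (f : Z -> R) Y z0 xi0 :
  closed_subspace Y -> decomposes f Y -> subdiff f z0 xi0 ->
  forall v, Y v <-> (forall t, f (vadd z0 (vscal t v)) - f z0 - xi0 (vscal t v) = 0).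
Proof.
  intros [_ [_ [Y_scal _]]] (l & g & Hl & g_inv & _ & g_line & [a [g_ge _]] & Hf)
         [Hxi0 Hsub] v.
  destruct (linear_fun_of_in_dual l Hl) as [l_add l_scal].
  destruct (linear_fun_of_in_dual xi0 Hxi0) as [_ xi0_scal].
  assert (Hf_line : forall t, f (vadd z0 (vscal t v)) = g (vadd z0 (vscal t v)) + l z0 + t * l v).
  { intro t. rewrite Hf, l_add, l_scal. ring. }
  assert (Hsub_line : forall t, f z0 + t * xi0 v <= f (vadd z0 (vscal t v))).
  { intro t. rewrite <- xi0_scal.
    replace (vscal t v) with (vsub (vadd z0 (vscal t v)) z0) at 1 by vring.
    apply Rge_le, Hsub. }
  split.
  - intros Hv t.
    assert (Hg : forall s, g (vadd z0 (vscal s v)) = g z0) by (intro s; apply g_inv, Y_scal, Hv).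
    assert (Hslope : xi0 v = l v).
    { assert (H1 := Hsub_line 1). assert (H2 := Hsub_line (-1)).
      rewrite Hf_line, Hg, (Hf z0) in H1, H2. lra. }
    rewrite Hf_line, Hg, xi0_scal, Hslope, (Hf z0). ring.
  - intros Hc. apply NNPP. intro Hv. apply (g_line z0 v Hv). exists (g z0).
    assert (Hg : forall t, g (vadd z0 (vscal t v)) = g z0 + t * (xi0 v - l v)).
    { intro t. specialize (Hc t). rewrite Hf_line, xi0_scal, (Hf z0) in Hc. lra. }
    assert (Hslope : xi0 v - l v = 0).
    { apply (affine_bounded_below_slope_0 a (g z0)). intro t. rewrite <- Hg. apply g_ge. }
    intro t. rewrite Hg, Hslope. ring.
Qed.

Theorem mainTheorem2 (Z : NormedSpace) (HZ : complete Z) (f : Z -> R)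
  (Hcont : continuous_fun f) (Hconv : convex_fun f) :
  exists Y : Z -> Prop,
    closed_subspace Y /\ decomposes f Y /\
    (forall Y' : Z -> Prop, closed_subspace Y' -> decomposes f Y' ->
       forall v, Y' v <-> Y v) /\
    (forall (z0 : Z) (xi0 : Z -> R), subdiff f z0 xi0 ->
       forall v, Y v <->
         (forall t : R, f (vadd z0 (vscal t v)) - f z0 - xi0 (vscal t v) = 0)).
Proof.
  destruct (subdiff_exists f Hcont Hconv vzero) as [xi Hxi].
  set (Y := constancy_space Z (fun z => f z - xi z)).
  assert (Hdec : decomposes f Y) by exact (decomposes_constancy_space f xi vzero Hcont Hconv Hxi).
  assert (Hclosed : closed_subspace Y)
    by exact (constancy_space_closed Z _
                (continuous_fun_minus f xi Hcont (in_dual_continuous xi (proj1 Hxi)))).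
  exists Y. split; [exact Hclosed|]. split; [exact Hdec|]. split.
  - intros Y' HY' HdecY' v.
    rewrite (decomposes_mem_iff f Y' vzero xi HY' HdecY' Hxi v).
    rewrite (decomposes_mem_iff f Y vzero xi Hclosed Hdec Hxi v). reflexivity.
  - intros z0 xi0 Hxi0. exact (decomposes_mem_iff f Y z0 xi0 Hclosed Hdec Hxi0).
Qed.
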